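(* For every integer $n\ge 0$ and every nonzero complex number $x$, \[ \sum_{j=0}^{n}L_{2(n-2j)}(x)=\sum_{j=0}^{n}\left(\frac{x^2+2}{2}\right)^jL_{2(n-j)}(x)=\frac{2}{x}F_{2(n+1)}(x). \]
   Context: The Fibonacci polynomials $F_n(x)$ and Lucas polynomials $L_n(x)$ are defined by $F_0(x)=0$, $F_1(x)=1$, $L_0(x)=2$, $L_1(x)=x$ and $G_{n+1}(x)=xG_n(x)+G_{n-1}(x)$; they are extended to negative indices by $F_{-n}(x)=(-1)^{n-1}F_n(x)$ and $L_{-n}(x)=(-1)^nL_n(x)$. *)

From HB Require Import structures.
From mathcomp Require Import all_boot all_order all_algebra.
From mathcomp Require Import complex.
From mathcomp Require Import Rstruct.
Set Implicit Arguments. Unset Strict Implicit. Unset Printing Implicit Defensive.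
Import Order.TTheory GRing.Theory Num.Theory.
Local Open Scope ring_scope.

Definition Cplx : fieldType := (Rdefinitions.R)[i].

Section FibLuc.
Variable K : comRingType.

(* Pair (G_n, G_{n+1}) of the sequence G_{n+1} = x G_n + G_{n-1}
   started from (G_0, G_1) = (a, b). *)
Fixpoint gpair (a b x : K) (n : nat) : K * K :=
  match n with
  | 0%N => (a, b)
  | k.+1 => let p := gpair a b x k in (p.2, x * p.2 + p.1)
  end.

Definition fibn (n : nat) (x : K) : K := (gpair 0 1 x n).1.
Definition lucn (n : nat) (x : K) : K := (gpair 2 x x n).1.

(* Extension to integer indices:
   F_{-m} = (-1)^(m-1) F_m,  L_{-m} = (-1)^m L_m.
   Negz k denotes -(k+1). *)
Definition fib (z : int) (x : K) : K :=
  match z with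
  | Posz n => fibn n x
  | Negz k => (-1) ^+ k * fibn k.+1 x
  end.
Definition luc (z : int) (x : K) : K :=
  match z with
  | Posz n => lucn n x
  | Negz k => (-1) ^+ k.+1 * lucn k.+1 x
  end.
End FibLuc.

From HB Require Import structures.
From mathcomp Require Import all_boot all_order all_algebra.
From mathcomp Require Import complex.
From mathcomp Require Import Rstruct.
From mathcomp Require Import ring zify.
Set Implicit Arguments. Unset Strict Implicit. Unset Printing Implicit Defensive.
Import Order.TTheory GRing.Theory Num.Theory.
Local Open Scope ring_scope.

(* Write T_n and U_n for the unweighted and the weighted sum.  Both become
   telescoping after multiplication by x, because x L_{m+2} = F_{m+4} - F_m.
   For T the outermost terms L_{2(n+2)} and L_{-2(n+2)} coincide, so
   T_{n+2} = T_n + 2 L_{2n+4}; for U, splitting off the j = 0 term gives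
   U_{n+1} = L_{2n+2} + c U_n with c = (x^2+2)/2, and this recurrence closes
   because F_{m+4} + F_m = (x^2+2) F_{m+2}.  Both yield x T_n = x U_n = 2 F_{2n+2}. *)

Section FibonacciLucas.
Variable K : comNzRingType.
Variable x : K.

Lemma fibnSS m : fibn m.+2 x = x * fibn m.+1 x + fibn m x.
Proof. by []. Qed.

Lemma lucnSS m : lucn m.+2 x = x * lucn m.+1 x + lucn m x.
Proof. by []. Qed.

Lemma lucn_fibn m : lucn m.+1 x = fibn m.+2 x + fibn m x.
Proof.
suff : lucn m.+1 x = fibn m.+2 x + fibn m x
       /\ lucn m.+2 x = fibn m.+3 x + fibn m.+1 x by case.
elim: m => [|m [IH1 IH2]]; first by rewrite /lucn /fibn /=; split; ring.
by split; rewrite // lucnSS IH2 IH1 (fibnSS m.+2) (fibnSS m); ring.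
Qed.

Lemma mulr_lucn m : x * lucn m.+2 x = fibn m.+4 x - fibn m x.
Proof. by rewrite lucn_fibn (fibnSS m.+2) (fibnSS m.+1) (fibnSS m); ring. Qed.

Lemma fibn_add4 m : fibn m.+4 x + fibn m x = (x ^+ 2 + 2) * fibn m.+2 x.
Proof. by rewrite (fibnSS m.+2) (fibnSS m.+1) (fibnSS m); ring. Qed.

Lemma mulr_lucn_even k : x * lucn (2 * k.+1) x = fibn (2 * k.+2) x - fibn (2 * k) x.
Proof.
have -> : (2 * k.+1 = (2 * k).+2)%N by lia.
have -> : (2 * k.+2 = (2 * k).+4)%N by lia.
exact: mulr_lucn.
Qed.

Lemma luc_opp m : luc (- m%:Z) x = (-1) ^+ m * lucn m x.
Proof. by case: m => [|m]; rewrite ?expr0 ?mul1r // -NegzE. Qed.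

Lemma luc_opp_even m : luc (- (2 * m)%:Z) x = lucn (2 * m) x.
Proof. by rewrite luc_opp -signr_odd oddM /= mul1r. Qed.

Definition luc_sum n := \sum_(0 <= j < n.+1) luc (2 * (n%:Z - 2 * j%:Z)) x.

Lemma luc_sumSS n : luc_sum n.+2 = luc_sum n + 2 * lucn (2 * n.+2) x.
Proof.
rewrite /luc_sum big_nat_recr // big_nat_recl //.
rewrite (_ : 2 * (n.+2%:Z - 2 * n.+2%:Z) = - (2 * n.+2)%:Z); last by lia.
rewrite (_ : 2 * (n.+2%:Z - 2 * 0%:Z) = (2 * n.+2)%:Z); last by lia.
rewrite luc_opp_even (eq_bigr (fun j => luc (2 * (n%:Z - 2 * j%:Z)) x)).
  by rewrite /= mulr2n; ring.
by move=> i _; congr luc; lia.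
Qed.

Lemma mulr_luc_sum n : x * luc_sum n = 2 * fibn (2 * n.+1) x.
Proof.
suff : x * luc_sum n = 2 * fibn (2 * n.+1) x
       /\ x * luc_sum n.+1 = 2 * fibn (2 * n.+2) x by case.
elim: n => [|n [IH1 IH2]].
  rewrite /luc_sum big_nat1 big_nat_recr // big_nat1.
  rewrite (_ : 2 * (1%:Z - 2 * 1%:Z) = - (2 * 1)%:Z); last by lia.
  by rewrite luc_opp_even /= /lucn /fibn /=; split; ring.
by split; rewrite // luc_sumSS mulrDr IH1 mulrCA mulr_lucn_even; ring.
Qed.

End FibonacciLucas.

Section WeightedLucasSum.
Variable K : comUnitRingType.
Variable x : K.
Hypothesis two_unit : (2 : K) \is a GRing.unit.

Let c := (x ^+ 2 + 2) / 2.

Definition luc_wsum n := \sum_(0 <= j < n.+1) c ^+ j * luc (2 * (n%:Z - j%:Z)) x.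

Lemma luc_wsumS n : luc_wsum n.+1 = lucn (2 * n.+1) x + c * luc_wsum n.
Proof.
rewrite /luc_wsum big_nat_recl // big_distrr expr0 mul1r.
rewrite (_ : 2 * (n.+1%:Z - 0%:Z) = (2 * n.+1)%:Z); last by lia.
congr (_ + _); apply: eq_bigr => i _.
by rewrite exprS -mulrA; congr (_ * (_ * luc _ _)); lia.
Qed.

Lemma mulr_luc_wsum n : x * luc_wsum n = 2 * fibn (2 * n.+1) x.
Proof.
elim: n => [|n IH]; first by rewrite /luc_wsum big_nat1 /= /lucn /fibn /=; ring.
have c_two : c * 2 = x ^+ 2 + 2 by rewrite divrK.
rewrite luc_wsumS mulrDr mulr_lucn_even mulrCA IH mulrA c_two.
rewrite (_ : (2 * n.+2 = (2 * n).+4)%N); last by lia.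
rewrite (_ : (2 * n.+1 = (2 * n).+2)%N); last by lia.
by rewrite -fibn_add4; ring.
Qed.

End WeightedLucasSum.

Theorem theorem10 (n : nat) (x : Cplx) (hx : x != 0) :
  (\sum_(0 <= j < n.+1) luc (2 * (n%:Z - 2 * j%:Z)) x
     = \sum_(0 <= j < n.+1) ((x ^+ 2 + 2) / 2) ^+ j * luc (2 * (n%:Z - j%:Z)) x)
  /\
  (\sum_(0 <= j < n.+1) ((x ^+ 2 + 2) / 2) ^+ j * luc (2 * (n%:Z - j%:Z)) x
     = 2 / x * fib (2 * (n%:Z + 1)) x).
Proof.
have two_unit : (2 : Cplx) \is a GRing.unit by rewrite unitfE pnatr_eq0.
have -> : 2 * (n%:Z + 1) = (2 * n.+1)%:Z by lia.
rewrite /= -/(luc_sum x n) -/(luc_wsum x n).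
have wsumE : luc_wsum x n = 2 / x * fibn (2 * n.+1) x.
  apply: (mulfI hx).
  by rewrite (mulr_luc_wsum x two_unit) mulrA [x * _]mulrC divfK.
split; last exact: wsumE.
apply: (mulfI hx).
by rewrite mulr_luc_sum wsumE mulrA [x * _]mulrC divfK.
Qed.
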